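(* Let $K$ be a finite simplicial complex, $\mathcal V$ a multivector field on $K$, $N\subseteq K$ a closed set, and let $\mathcal M$ be the minimal Morse decomposition of $\mathrm{inv}_{\mathcal V}(N)$. Let $(P,E)$ be an index pair in $N$ for an isolated invariant set $S$ isolated by $N$. If $\mathcal A$ is a set of multivectors of $\mathcal V$ with $\langle\mathcal A\rangle\subseteq N$, $\langle\mathcal A\rangle\cap E=\emptyset$, $\mathrm{mo}(\langle\mathcal A\rangle)\subseteq P$, and $\langle\mathcal A\rangle\cap M=\emptyset$ for every $M\in\mathcal M$ with $M\not\subseteq S$, then $(P\cup\langle\mathcal A\rangle,E)$ is an index pair in $N$ for $S$.
   Context: $\sigma\le\tau$ means $\sigma$ is a face of $\tau$; $\mathrm{cl}(A)$ is the set of faces of simplices of $A$; $A$ is closed if $A=\mathrm{cl}(A)$; $\mathrm{mo}(A)=\mathrm{cl}(A)\setminus A$. A multivector is a convex subset of $K$ w.r.t. $\le$; a multivector field $\mathcal V$ is a partition of $K$ into multivectors; $[\sigma]_{\mathcal V}$ is the multivector containing $\sigma$. For a set $\mathcal A$ of multivectors, $\langle\mathcal A\rangle=\bigcup_{A\in\mathcal A}A$. $F_{\mathcal V}(\sigma)=[\sigma]_{\mathcal V}\cup\mathrm{cl}(\sigma)$, $F_{\mathcal V}(A)=\bigcup_{\sigma\in A}F_{\mathcal V}(\sigma)$. A path is a finite sequence with $\sigma_j\in F_{\mathcal V}(\sigma_{j-1})$; a solution is a bi-infinite one. A multivector $V$ is critical if $H_k(\mathrm{cl}(V),\mathrm{mo}(V))\ne0$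 for some $k$ (finite field coefficients), regular otherwise. A solution $\rho$ is essential if whenever $[\rho(i)]_{\mathcal V}$ is regular there are $i^-<i<i^+$ with $[\rho(i^\pm)]_{\mathcal V}\ne[\rho(i)]_{\mathcal V}$. $\mathrm{inv}_{\mathcal V}(A)$ is the set of simplices of $A$ lying on an essential solution with image in $A$; $S$ is invariant if $\mathrm{inv}(S)=S$. An invariant set $S$ is isolated by the closed set $N$ if $S$ is a union of multivectors and every path in $N$ with both endpoints in $S$ lies in $S$. A Morse decomposition of an invariant set $S$ is a family of mutually disjoint isolated invariant subsets (Morse sets), indexed by a finite poset, such that every essential solution $\rho$ in $S$ either lies in one Morse set or has $\alpha(\rho)\subseteq M_q$ and $\omega(\rho)\subseteq M_p$ with $q>p$ ($\alpha,\omega$ being the sets of simplices visited infinitely often in the past, resp. future). An isolated invariant set is minimal if its only Morse decomposition is itself; the minimal Morse decomposition is the one all of whose Morse sets are minimal. An index pair in $N$ for $S$ is a pair of closed sets $E\subseteq P\subseteq N$ with: (1) $F_{\mathcal V}(E)\cap N\subseteq E$; (2) $F_{\mathcal V}(P)\cap N\subseteq P$; (3) $F_{\mathcal V}(P\setminus E)\subseteq N$; (4) $S=\mathrm{inv}_{\mathcal V}(P\setminus E)$. *)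

From HB Require Import structures.
From mathcomp Require Import all_boot all_order all_algebra.
From mathcomp Require Import boolp.
Set Implicit Arguments. Unset Strict Implicit. Unset Printing Implicit Defensive.
Import Order.TTheory GRing.Theory Num.Theory.
Local Open Scope ring_scope.

(* Vertices are 'I_n (totally ordered); a simplex is a (nonempty) finite set of
   vertices; a set of simplices is a {set (simplex n)}. *)
Notation simplex n := {set 'I_n} (only parsing).

Section Complexes.
Variable n : nat.
Local Notation sx := (simplex n).

Definition simplicial_complex (K : {set sx}) : Prop :=
  set0 \notin K /\
  (forall s t : sx, t \in K -> s \subset t -> s != set0 -> s \in K).

Variable K : {set sx}.

Definition cl (A : {set sx}) : {set sx} :=
  [set t in K | [exists s in A, t \subset s]].
Definition closedb (A : {set sx}) : Prop := A = cl A.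
Definition mo (A : {set sx}) : {set sx} := cl A :\: A.

Definition convex (A : {set sx}) : Prop :=
  forall s t x : sx, s \in A -> t \in A -> x \in K ->
    s \subset x -> x \subset t -> x \in A.

Definition multivector_field (V : {set {set sx}}) : Prop :=
  partition V K /\ forall A, A \in V -> convex A.

Variable V : {set {set sx}}.

Definition mvec (s : sx) : {set sx} := pblock V s.

Definition union_mv (A : {set {set sx}}) : {set sx} := cover A.

Definition Fv (s : sx) : {set sx} := mvec s :|: cl [set s].
Definition FvS (A : {set sx}) : {set sx} := \bigcup_(s in A) Fv s.

Variable F : fieldType.

Definition chain := {ffun sx -> F^o}.
Definition chain_of (s : sx) : chain := [ffun t => (t == s)%:R].

Definition face_i (s : sx) (i : nat) : sx :=
  [set x in take i (enum s) ++ drop i.+1 (enum s)].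

(* simplicial boundary of an oriented simplex (vertices in increasing order);
   non-augmented: the boundary of a vertex is 0 *)
Definition bd (s : sx) : chain :=
  if (#|s| <= 1)%N then 0 else
  \sum_(i < #|s|) ((-1) ^+ i : F) *: chain_of (face_i s i).

Definition bdry_fun (c : chain) : chain := \sum_(s : sx) c s *: bd s.
Definition bdry : 'End(chain) := linfun bdry_fun.

Definition Cd (L : {set sx}) (d : nat) : {vspace chain} :=
  <<map chain_of (enum [set s in L | #|s| == d])>>%VS.

(* relative cycles and relative boundaries of H_k(L, L0):
   Z_k = { c in C_k(L) | bd c in C_{k-1}(L0) },  B_k = bd C_{k+1}(L) + C_k(L0) *)
Definition rel_cycles (L L0 : {set sx}) (k : nat) : {vspace chain} :=
  (Cd L k.+1 :&: (bdry @^-1: Cd L0 k))%VS.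
Definition rel_bounds (L L0 : {set sx}) (k : nat) : {vspace chain} :=
  (bdry @: Cd L k.+2 + Cd L0 k.+1)%VS.

Definition rel_homology_nonzero (L L0 : {set sx}) (k : nat) : Prop :=
  ~~ (rel_cycles L L0 k <= rel_bounds L L0 k)%VS.

Definition critical (A : {set sx}) : Prop :=
  exists k : nat, rel_homology_nonzero (cl A) (mo A) k.
Definition regular (A : {set sx}) : Prop := ~ critical A.

Definition Frel : rel sx := fun a b => b \in Fv a.
Definition is_path (x : sx) (p : seq sx) : Prop := path Frel x p.

Definition solution (rho : int -> sx) : Prop :=
  forall i : int, rho (i + 1)%R \in Fv (rho i).

Definition essential (rho : int -> sx) : Prop :=
  solution rho /\
  forall i : int, regular (mvec (rho i)) ->
    (exists2 j : int, (j < i)%R & mvec (rho j) != mvec (rho i)) /\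
    (exists2 j : int, (i < j)%R & mvec (rho j) != mvec (rho i)).

Definition inv_mv (A : {set sx}) : {set sx} :=
  [set s in A | `[< exists rho : int -> sx, essential rho /\
                    (forall i, rho i \in A) /\ exists i, rho i = s >]].

Definition invariant (S : {set sx}) : Prop := inv_mv S = S.

Definition mv_union (S : {set sx}) : Prop :=
  forall s, s \in S -> mvec s \subset S.

Definition isolated_by (N S : {set sx}) : Prop :=
  invariant S /\ closedb N /\ mv_union S /\
  forall (x : sx) (p : seq sx), is_path x p -> all (mem N) (x :: p) ->
    x \in S -> last x p \in S -> all (mem S) (x :: p).

Definition isolated_invariant (S : {set sx}) : Prop :=
  exists N, isolated_by N S.

Definition alpha_lim (rho : int -> sx) : {set sx} :=
  [set s | `[< forall k : nat, exists i : int, (i <= - (k%:Z))%R /\ rho i = s >]].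
Definition omega_lim (rho : int -> sx) : {set sx} :=
  [set s | `[< forall k : nat, exists i : int, (k%:Z <= i)%R /\ rho i = s >]].

Definition partial_order m (le : rel 'I_m) : Prop :=
  reflexive le /\ antisymmetric le /\ transitive le.

Definition morse_decomposition (S : {set sx}) (m : nat) (le : rel 'I_m)
    (M : 'I_m -> {set sx}) : Prop :=
  partial_order le /\
  (forall p, M p != set0) /\
  (forall p, M p \subset S) /\
  (forall p q, p != q -> [disjoint M p & M q]) /\
  (forall p, isolated_invariant (M p)) /\
  forall rho : int -> sx, essential rho -> (forall i, rho i \in S) ->
    (exists p, forall i, rho i \in M p) \/
    (exists p q, le p q /\ p != q /\
       alpha_lim rho \subset M q /\ omega_lim rho \subset M p).

Definition minimal_iis (S : {set sx}) : Prop :=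
  isolated_invariant S /\
  forall m le (M : 'I_m -> {set sx}), morse_decomposition S le M ->
    forall p, M p = S.

Definition minimal_morse_decomposition (S : {set sx}) (m : nat) (le : rel 'I_m)
    (M : 'I_m -> {set sx}) : Prop :=
  morse_decomposition S le M /\ forall p, minimal_iis (M p).

Definition index_pair (N S P E : {set sx}) : Prop :=
  closedb P /\ closedb E /\ E \subset P /\ P \subset N /\
  FvS E :&: N \subset E /\
  FvS P :&: N \subset P /\
  FvS (P :\: E) \subset N /\
  S = inv_mv (P :\: E).
End Complexes.

From mathcomp Require Import all_boot all_order all_algebra boolp.
Import Order.TTheory GRing.Theory Num.Theory.

(* Adding U := <A> to P keeps P closed, since mo U lies in P, and keeps it
   F-invariant inside N, since U is a union of multivectors and F(U) lies in
   cl U.  The invariant part does not grow.  P is forward invariant in N, so an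
   essential solution in (P ∪ U) \ E that leaves P was outside P, hence in U,
   at all earlier times.  Its trajectory or its α-limit set lies in a Morse
   set, which then meets U, so by hypothesis lies in S ⊆ P: a contradiction. *)

Section IndexPairExtension.
Context {n : nat} {K : {set simplex n}} {V : {set {set simplex n}}} {F : fieldType}.

Lemma clS (X Y : {set simplex n}) : X \subset Y -> cl K X \subset cl K Y.
Proof.
move=> XY; apply/subsetP=> t; rewrite !inE => /andP[-> /existsP[s /andP[sX ts]]].
by apply/existsP; exists s; rewrite ts (subsetP XY).
Qed.

Lemma clU (X Y : {set simplex n}) : cl K (X :|: Y) = cl K X :|: cl K Y.
Proof.
apply/setP=> t; rewrite !inE; case: (t \in K) => //=.
apply/existsP/orP => [[s]|[|]] /=.
- by rewrite inE => /andP[/orP[sX|sY] ts]; [left|right];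
    apply/existsP; exists s; rewrite ?sX ?sY.
- by move=> /existsP[s /andP[sX ts]]; exists s; rewrite inE sX ts.
- by move=> /existsP[s /andP[sY ts]]; exists s; rewrite inE sY orbT ts.
Qed.

Lemma closed_subK {X : {set simplex n}} : closedb K X -> X \subset K.
Proof. by move=> ->; apply/subsetP=> t; rewrite inE => /andP[]. Qed.

Lemma sub_cl (X : {set simplex n}) : X \subset K -> X \subset cl K X.
Proof.
move=> XK; apply/subsetP=> t tX; rewrite inE (subsetP XK) //=.
by apply/existsP; exists t; rewrite tX subxx.
Qed.

Lemma cl_sub_mo (X : {set simplex n}) : cl K X \subset X :|: mo K X.
Proof. by apply/subsetP=> t tX; rewrite /mo in_setU in_setD tX andbT; case: (t \in X). Qed.

Lemma closedU (X Y : {set simplex n}) :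
  closedb K X -> X :|: Y \subset K -> mo K Y \subset X -> closedb K (X :|: Y).
Proof.
move=> clX XYK moY; apply/eqP; rewrite eqEsubset sub_cl //= clU -clX subUset subsetUl /=.
by rewrite (subset_trans (cl_sub_mo Y)) // setUC setSU.
Qed.

(* Pigeonhole: only finitely many simplices are available to the past. *)
Lemma alpha_lim_nonempty (rho : int -> simplex n) : exists s, s \in alpha_lim rho.
Proof.
apply: contrapT => noalpha.
have late s : exists k : nat, forall i : int, (i <= - k%:Z)%R -> rho i <> s.
  apply: contrapT => Hs; apply: noalpha; exists s; rewrite inE; apply/asboolP => k.
  by apply: contrapT => Hk; apply: Hs; exists k => i Hi Hr; apply: Hk; exists i.
pose bound s := projT1 (cid (late s)).
pose k := \max_(s : simplex n) bound s.
apply: (projT2 (cid (late (rho (- k%:Z)%R)))) (- k%:Z)%R _ erefl.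
by rewrite lerN2 lez_nat (@leq_bigmax _ bound).
Qed.

Lemma alpha_limP {rho : int -> simplex n} {s} (j : int) :
  s \in alpha_lim rho -> exists2 i, (i <= j)%R & rho i = s.
Proof.
rewrite inE => /asboolP /(_ `|j|%N) [i [ij ris]]; exists i => //.
by rewrite (le_trans ij) // lerNl abszE ler_normr lexx orbT.
Qed.

Local Notation inv := (inv_mv K V F).

Lemma inv_mvS {X Y : {set simplex n}} : X \subset Y -> inv X \subset inv Y.
Proof.
move=> XY; apply/subsetP=> t; rewrite !inE => /andP[tX /asboolP[rho [ess [rX ex]]]].
rewrite (subsetP XY) //=; apply/asboolP; exists rho; split=> //; split=> // i.
exact: (subsetP XY).
Qed.

Lemma essential_in_inv {X : {set simplex n}} {rho : int -> simplex n} (i : int) :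
  essential K V F rho -> (forall j, rho j \in X) -> rho i \in inv X.
Proof.
by move=> ess rX; rewrite inE rX; apply/asboolP; exists rho; split=> //; split=> //; exists i.
Qed.

Lemma union_mv_pblock {A : {set {set simplex n}}} {s} :
  partition V K -> A \subset V -> s \in union_mv A -> mvec V s \subset union_mv A.
Proof.
move=> /and3P[_ triv _] AV /bigcupP[a aA sa].
rewrite /mvec (def_pblock triv (subsetP AV a aA) sa).
by apply/subsetP=> x xa; apply/bigcupP; exists a.
Qed.

Lemma Fv_union_mv (A : {set {set simplex n}}) (P : {set simplex n}) s :
  partition V K -> A \subset V -> mo K (union_mv A) \subset P ->
  s \in union_mv A -> Fv K V s \subset P :|: union_mv A.
Proof.
move=> partV AV moP sU; apply/subsetP=> t; rewrite inE => /orP[tm|tc].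
  by rewrite inE (subsetP (union_mv_pblock partV AV sU)) ?orbT.
have /(subsetP (cl_sub_mo _)) : t \in cl K (union_mv A).
  by apply: (subsetP (clS [set s] _ _)) tc; rewrite sub1set.
by rewrite setUC; apply: (subsetP (setSU _ moP)).
Qed.

Lemma solution_forward_closed {P N : {set simplex n}} {rho : int -> simplex n} :
  FvS K V P :&: N \subset P -> solution K V rho -> (forall i, rho i \in N) ->
  forall i j, (i <= j)%R -> rho i \in P -> rho j \in P.
Proof.
move=> FPN sol rN i j ij Pi.
have -> : j = (i + `|j - i|%N%:Z)%R by rewrite gez0_abs ?subr_ge0 // addrCA subrr addr0.
elim: `|j - i|%N => [|d IH]; first by rewrite addr0.
rewrite -addn1 PoszD addrA; apply: (subsetP FPN); rewrite inE rN andbT.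
by apply/bigcupP; exists (rho (i + d%:Z)%R); [exact: IH | exact: sol].
Qed.

Lemma morse_set_visited_before {S : {set simplex n}} {m} {le : rel 'I_m}
    {M : 'I_m -> {set simplex n}} {rho : int -> simplex n} (j : int) :
  morse_decomposition K V F S le M -> essential K V F rho ->
  (forall i, rho i \in S) -> exists p, exists2 i, (i <= j)%R & rho i \in M p.
Proof.
move=> [_ [_ [_ [_ [_ morse]]]]] ess rS.
case: (morse rho ess rS) => [[p rM]|[p [q [_ [_ [alphaM _]]]]]].
  by exists p, j.
have [s salpha] := alpha_lim_nonempty rho.
have [i ij ris] := alpha_limP j salpha.
by exists q, i; rewrite // ris (subsetP alphaM).
Qed.

Lemma inv_mv_setU_sub {N S P E U : {set simplex n}} {m} {le : rel 'I_m}
    {M : 'I_m -> {set simplex n}} :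
  morse_decomposition K V F (inv N) le M ->
  S = inv (P :\: E) ->
  FvS K V P :&: N \subset P ->
  P :|: U \subset N ->
  (forall p, ~~ (M p \subset S) -> [disjoint U & M p]) ->
  inv ((P :|: U) :\: E) \subset S.
Proof.
move=> md defS FPN PUN MU.
have SP : S \subset P by rewrite defS; apply/subsetP=> x; rewrite !inE => /andP[/andP[]].
have UM_P p x : x \in U -> x \in M p -> x \in P.
  move=> xU xM; apply/(subsetP SP)/(subsetP _ x xM); apply: contraT.
  by move=> /MU /disjointFr /(_ xU); rewrite xM.
apply/subsetP=> t; rewrite inE => /andP[_ /asboolP[rho [ess [rX [i0 <-]]]]].
have rN i : rho i \in N by apply: (subsetP PUN); have := rX i; rewrite inE => /andP[].
have [rP|/existsNP[i1 /negP ri1]] := pselect (forall i, rho i \in P).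
  rewrite defS; apply: essential_in_inv => // i.
  by have := rX i; rewrite !inE rP /= !andbT.
have [p [i ii1 riM]] :=
  morse_set_visited_before i1 md ess (fun i => essential_in_inv i ess rN).
have riP : rho i \notin P.
  by apply: contra ri1; apply: (solution_forward_closed FPN ess.1 rN).
have := rX i; rewrite !inE (negbTE riP) /= => /andP[_ riU].
by rewrite (UM_P p _ riU riM) in riP.
Qed.

End IndexPairExtension.

Theorem proposition30 (F : finFieldType) (n : nat) (K : {set simplex n})
  (V : {set {set simplex n}}) (N S P E : {set simplex n})
  (m : nat) (le : rel 'I_m) (M : 'I_m -> {set simplex n})
  (A : {set {set simplex n}}) :
  simplicial_complex K ->
  multivector_field K V ->
  closedb K N ->
  minimal_morse_decomposition K V F (inv_mv K V F N) le M ->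
  isolated_by K V F N S ->
  index_pair K V F N S P E ->
  A \subset V ->
  union_mv A \subset N ->
  [disjoint union_mv A & E] ->
  mo K (union_mv A) \subset P ->
  (forall p : 'I_m, ~~ (M p \subset S) -> [disjoint union_mv A & M p]) ->
  index_pair K V F N S (P :|: union_mv A) E.
Proof.
move=> _ [partV _] clN [md _] _ [clP [clE [EP [PN [FEN [FPN [FPE defS]]]]]]] AV UN _ moP MU.
set U := union_mv A.
have PUN : P :|: U \subset N by rewrite subUset PN UN.
have FU s : s \in U -> Fv K V s \subset P :|: U by apply: Fv_union_mv.
do 7?split => //.
- by apply: closedU => //; apply: subset_trans PUN (closed_subK clN).
- exact: subset_trans EP (subsetUl _ _).
- rewrite /FvS bigcup_setU setIUl subUset (subset_trans FPN) ?subsetUl //=.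
  by apply/(subset_trans (subsetIl _ _))/bigcupsP => s /FU.
- rewrite /FvS setDUl bigcup_setU subUset FPE /=.
  by apply/bigcupsP => s /setDP[/FU FsU _]; apply: subset_trans FsU PUN.
- apply/eqP; rewrite eqEsubset (inv_mv_setU_sub md defS FPN PUN MU) andbT.
  by rewrite defS inv_mvS // setSD ?subsetUl.
Qed.
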